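(* Under the standing assumptions of the context, define a ternary relation $C$ on $N$ by: $C(x;y,z)$ holds iff either (a) $y=z$ and $x\ne y$; or (b) $x,y,z$ are distinct, $x<\min\{y,z\}$ and $\{x,y,z\}\in E$; or (c) $x,y,z$ are distinct, $\max\{y,z\}<x$ and $\{x,y,z\}\notin E$. Then $C$ satisfies axioms (C1)–(C6), and for all distinct $x,y,z\in N$ at least one of $C(x;y,z),C(y;x,z),C(z;x,y)$ holds.
   Context: Standing assumptions: $(N,E)$ is a countably infinite 3-hypergraph (a set $N$ with a set $E$ of 3-element subsets, the edges) which is ${\le}4$-set-homogeneous (for $s\le4$, whenever $U,V\subseteq N$ of size $s$ carry isomorphic induced subhypergraphs there is $g\in \mathrm{Aut}(N,E)$ with $U^g=V$), and $\le$ is a total order on $N$ preserved by $\mathrm{Aut}(N,E)$. Moreover, for each $i\in\{1,2,3\}$ there is a 4-subset of $N$ containing exactly $i$ edges, and for all $u_1<u_2<u_3<u_4$ in $N$: if $\{u_1,\dots,u_4\}$ contains exactly one edge, it is $\{u_1,u_2,u_3\}$; if it contains exactly two edges, they are $\{u_1,u_3,u_4\}$ and $\{u_2,u_3,u_4\}$; if it contains exactly three edges, they are the three 3-subsets containing $u_1$. Axioms, for all $x,y,z,w$: (C1) $C(x;y,z)\to C(x;z,y)$; (C2) $C(x;y,z)\to\neg C(y;x,z)$; (C3) $C(x;y,z)\to (C(x;w,z)\vee C(w;y,z))$; (C4) $x\ne y\to C(x;y,y)$; (C5) $\exists x\, C(x;y,z)$; (C6) $x\ne y\to\exists z(y\ne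 z\wedge C(x;y,z))$. *)

From Stdlib Require Import List Classical.
Import ListNotations.

(* A 3-hypergraph on a type N: E x y z means {x,y,z} is an edge. *)
Definition hyper3 {N : Type} (E : N -> N -> N -> Prop) : Prop :=
  (forall x y z, E x y z -> x <> y /\ y <> z /\ x <> z) /\
  (forall x y z, E x y z -> E y x z) /\
  (forall x y z, E x y z -> E x z y).

Definition countably_infinite (N : Type) : Prop :=
  exists f : nat -> N, (forall m n, f m = f n -> m = n) /\ (forall x, exists n, f n = x).

Definition is_aut {N : Type} (E : N -> N -> N -> Prop) (g : N -> N) : Prop :=
  (forall x y, g x = g y -> x = y) /\ (forall y, exists x, g x = y) /\
  (forall x y z, E x y z <-> E (g x) (g y) (g z)).

(* U, V finite subsets given as duplicate-free lists; an isomorphism of the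
   induced subhypergraphs is a map f : U -> V that is a bijection U -> V
   and preserves edges and non-edges among elements of U. *)
Definition induced_iso {N : Type} (E : N -> N -> N -> Prop) (U V : list N) (f : N -> N) : Prop :=
  (forall x, In x U -> In (f x) V) /\
  (forall x y, In x U -> In y U -> f x = f y -> x = y) /\
  (forall y, In y V -> exists x, In x U /\ f x = y) /\
  (forall x y z, In x U -> In y U -> In z U -> (E x y z <-> E (f x) (f y) (f z))).

Definition set_homogeneous_le4 {N : Type} (E : N -> N -> N -> Prop) : Prop :=
  forall U V : list N, NoDup U -> NoDup V -> length U <= 4 -> length U = length V ->
    (exists f, induced_iso E U V f) ->
    exists g, is_aut E g /\ (forall y, In y V <-> exists x, In x U /\ g x = y).

Definition strict_total_order {N : Type} (lt : N -> N -> Prop) : Prop :=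
  (forall x, ~ lt x x) /\ (forall x y z, lt x y -> lt y z -> lt x z) /\
  (forall x y, lt x y \/ x = y \/ lt y x).

Definition order_preserved {N : Type} (E : N -> N -> N -> Prop) (lt : N -> N -> Prop) : Prop :=
  forall g, is_aut E g -> forall x y, lt x y -> lt (g x) (g y).

Inductive count_true : list Prop -> nat -> Prop :=
| ct_nil : count_true [] 0
| ct_yes : forall (P : Prop) Ps k, P -> count_true Ps k -> count_true (P :: Ps) (S k)
| ct_no : forall (P : Prop) Ps k, ~ P -> count_true Ps k -> count_true (P :: Ps) k.

Definition edge_count_4 {N : Type} (E : N -> N -> N -> Prop) (a b c d : N) (k : nat) : Prop :=
  count_true [E a b c; E a b d; E a c d; E b c d] k.

Definition standing {N : Type} (E : N -> N -> N -> Prop) (lt : N -> N -> Prop) : Prop :=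
  hyper3 E /\ countably_infinite N /\ set_homogeneous_le4 E /\
  strict_total_order lt /\ order_preserved E lt /\
  (forall i, 1 <= i <= 3 -> exists a b c d : N,
      NoDup [a; b; c; d] /\ edge_count_4 E a b c d i) /\
  (forall u1 u2 u3 u4, lt u1 u2 -> lt u2 u3 -> lt u3 u4 ->
     (edge_count_4 E u1 u2 u3 u4 1 -> E u1 u2 u3) /\
     (edge_count_4 E u1 u2 u3 u4 2 -> E u1 u3 u4 /\ E u2 u3 u4) /\
     (edge_count_4 E u1 u2 u3 u4 3 -> E u1 u2 u3 /\ E u1 u2 u4 /\ E u1 u3 u4)).

Definition Crel {N : Type} (E : N -> N -> N -> Prop) (lt : N -> N -> Prop) (x y z : N) : Prop :=
  (y = z /\ x <> y) \/
  (x <> y /\ y <> z /\ x <> z /\ lt x y /\ lt x z /\ E x y z) \/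
  (x <> y /\ y <> z /\ x <> z /\ lt y x /\ lt z x /\ ~ E x y z).

Definition C_axioms {N : Type} (C : N -> N -> N -> Prop) : Prop :=
  (forall x y z, C x y z -> C x z y) /\
  (forall x y z, C x y z -> ~ C y x z) /\
  (forall x y z w, C x y z -> C x w z \/ C w y z) /\
  (forall x y, x <> y -> C x y y) /\
  (forall y z, exists x, C x y z) /\
  (forall x y, x <> y -> exists z, y <> z /\ C x y z).

(* On an increasing triple a < b < c the relation C is read off the hypergraph:
   C(a; b, c) holds iff {a, b, c} is an edge, C(c; a, b) iff it is not, and C(b; a, c)
   never.  This gives (C1), (C2), (C4) and the totality statement directly.  For (C3),
   sorting the four points involved leaves only the five edge patterns that the standing
   assumptions allow on an increasing 4-set, and each of them yields one of the two
   alternatives.  For (C5) and (C6), 2-set homogeneity moves an increasing edge (or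
   non-edge) onto any given increasing pair by an automorphism, which is increasing. *)

From Stdlib Require Import List Classical ClassicalEpsilon.
Import ListNotations.

Section StrictTotalOrder.

Context {N : Type} {lt : N -> N -> Prop}.
Hypothesis lt_order : strict_total_order lt.

Lemma lt_irrefl x : ~ lt x x.
Proof. apply lt_order. Qed.

Lemma lt_trans x y z : lt x y -> lt y z -> lt x z.
Proof. apply lt_order. Qed.

Lemma lt_asym x y : lt x y -> ~ lt y x.
Proof. intros hxy hyx; exact (lt_irrefl x (lt_trans _ _ _ hxy hyx)). Qed.

Lemma lt_neq x y : lt x y -> x <> y.
Proof. intros hxy ->; exact (lt_irrefl y hxy). Qed.

Lemma lt_neq_sym x y : lt x y -> y <> x.
Proof. intros hxy; apply not_eq_sym, lt_neq, hxy. Qed.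

Lemma lt_connex x y : x <> y -> lt x y \/ lt y x.
Proof. intros nxy; destruct (proj2 (proj2 lt_order) x y) as [|[|]]; tauto. Qed.

Lemma lt_insert a b c w : lt a b -> lt b c -> w <> a -> w <> b -> w <> c ->
  lt w a \/ (lt a w /\ lt w b) \/ (lt b w /\ lt w c) \/ lt c w.
Proof.
  intros hab hbc nwa nwb nwc.
  destruct (lt_connex w b nwb).
  - destruct (lt_connex w a nwa); tauto.
  - destruct (lt_connex w c nwc); tauto.
Qed.

Lemma sorted_triple_wlog (P : N -> N -> N -> Prop) :
  (forall x y z, P x y z -> P y x z) ->
  (forall x y z, P x y z -> P x z y) ->
  (forall a b c, lt a b -> lt b c -> P a b c) ->
  forall x y z, x <> y -> y <> z -> x <> z -> P x y z.
Proof.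
  intros swap12 swap23 sorted.
  assert (first_pair_sorted : forall x y z, lt x y -> y <> z -> x <> z -> P x y z).
  { intros x y z hxy nyz nxz.
    destruct (lt_connex y z nyz) as [|hzy]; [auto|].
    destruct (lt_connex x z nxz).
    - apply swap23, sorted; assumption.
    - apply swap23, swap12, sorted; assumption. }
  intros x y z nxy nyz nxz.
  destruct (lt_connex x y nxy); [auto|].
  apply swap12, first_pair_sorted; auto.
Qed.

End StrictTotalOrder.

Section CRelation.

Context {N : Type} {E : N -> N -> N -> Prop} {lt : N -> N -> Prop}.
Hypothesis E_hyper : hyper3 E.
Hypothesis lt_order : strict_total_order lt.

Local Notation C := (Crel E lt).

Lemma E_swap12 x y z : E x y z -> E y x z.
Proof. apply E_hyper. Qed.

Lemma E_swap23 x y z : E x y z -> E x z y.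
Proof. apply E_hyper. Qed.

Lemma Crel_swap x y z : C x y z -> C x z y.
Proof.
  unfold Crel; intros [[-> ?]|[?|?]]; [left|right; left|right; right]; intuition.
  all: auto using E_swap23.
Qed.

Lemma Crel_diag x y : x <> y -> C x y y.
Proof. left; auto. Qed.

Lemma Crel_neq13 x y z : C x y z -> x <> z.
Proof. unfold Crel; intros [[-> ?]|[?|?]]; tauto. Qed.

Lemma Crel_asym x y z : C x y z -> ~ C y x z.
Proof.
  unfold Crel.
  intros [[eyz nxy]|[(nxy&nyz&nxz&lxy&lxz&e)|(nxy&nyz&nxz&lyx&lzx&ne)]]
         [[exz nyx]|[(nyx&nxz'&nyz'&lyx'&lyz'&e')|(nyx&nxz'&nyz'&lxy'&lzy'&ne')]];
    subst; try congruence;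
    solve [ eapply (lt_asym lt_order x y); assumption
          | eapply (lt_asym lt_order y x); assumption
          | auto using E_swap12 ].
Qed.

Lemma Crel_of_min a b c : lt a b -> lt b c -> E a b c -> C a b c.
Proof.
  intros hab hbc e; right; left.
  pose proof (lt_trans lt_order _ _ _ hab hbc).
  repeat split; eauto using lt_neq.
Qed.

Lemma Crel_of_max a b c : lt a b -> lt b c -> ~ E a b c -> C c a b.
Proof.
  intros hab hbc ne; right; right.
  pose proof (lt_trans lt_order _ _ _ hab hbc).
  repeat split; eauto using lt_neq, lt_neq_sym.
  intro e; apply ne, E_swap23, E_swap12, e.
Qed.

Lemma Crel_some_vertex x y z : x <> y -> y <> z -> x <> z ->
  C x y z \/ C y x z \/ C z x y.
Proof.
  revert x y z.
  apply (sorted_triple_wlog lt_order (fun x y z => C x y z \/ C y x z \/ C z x y));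
    intros a b c.
  - intros [|[|]]; auto using Crel_swap.
  - intros [|[|]]; auto using Crel_swap.
  - intros hab hbc; destruct (classic (E a b c)).
    + left; apply Crel_of_min; auto.
    + right; right; apply Crel_of_max; auto.
Qed.

End CRelation.

Definition increasing_4set_rules {N : Type} (E : N -> N -> N -> Prop) (lt : N -> N -> Prop) :=
  forall u1 u2 u3 u4, lt u1 u2 -> lt u2 u3 -> lt u3 u4 ->
     (edge_count_4 E u1 u2 u3 u4 1 -> E u1 u2 u3) /\
     (edge_count_4 E u1 u2 u3 u4 2 -> E u1 u3 u4 /\ E u2 u3 u4) /\
     (edge_count_4 E u1 u2 u3 u4 3 -> E u1 u2 u3 /\ E u1 u2 u4 /\ E u1 u3 u4).

Definition increasing_4set_patterns {N : Type} (E : N -> N -> N -> Prop) (lt : N -> N -> Prop) :=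
  forall a b c d, lt a b -> lt b c -> lt c d ->
  (~ E a b c /\ ~ E a b d /\ ~ E a c d /\ ~ E b c d) \/
  (E a b c /\ ~ E a b d /\ ~ E a c d /\ ~ E b c d) \/
  (~ E a b c /\ ~ E a b d /\ E a c d /\ E b c d) \/
  (E a b c /\ E a b d /\ E a c d /\ ~ E b c d) \/
  (E a b c /\ E a b d /\ E a c d /\ E b c d).

Ltac count_decided :=
  repeat first [ apply ct_yes; [assumption|] | apply ct_no; [assumption|] ];
  apply ct_nil.

Lemma increasing_4set_patterns_of_rules {N : Type} (E : N -> N -> N -> Prop) (lt : N -> N -> Prop) :
  increasing_4set_rules E lt -> increasing_4set_patterns E lt.
Proof.
  intros rules a b c d hab hbc hcd.
  destruct (rules a b c d hab hbc hcd) as (one & two & three).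
  unfold edge_count_4 in *.
  destruct (classic (E a b c)), (classic (E a b d)), (classic (E a c d)), (classic (E b c d));
    first [ specialize (one ltac:(count_decided))
          | specialize (two ltac:(count_decided))
          | specialize (three ltac:(count_decided))
          | idtac ];
    tauto.
Qed.

Section SeparationAxiom.

Context {N : Type} {E : N -> N -> N -> Prop} {lt : N -> N -> Prop}.
Hypothesis E_hyper : hyper3 E.
Hypothesis lt_order : strict_total_order lt.
Hypothesis patterns : increasing_4set_patterns E lt.

Local Notation C := (Crel E lt).

Ltac saturate_E :=
  repeat match goal with
  | H : E ?a ?b ?c |- _ =>
      lazymatch goal with _ : E b a c |- _ => fail | _ => pose proof (E_swap12 E_hyper _ _ _ H) end
  | H : E ?a ?b ?c |- _ =>
      lazymatch goal with _ : E a c b |- _ => fail | _ => pose proof (E_swap23 E_hyper _ _ _ H) end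
  | H : ~ E ?a ?b ?c |- _ =>
      lazymatch goal with _ : ~ E b a c |- _ => fail | _ =>
        assert (~ E b a c) by (intro; apply H, (E_swap12 E_hyper); assumption) end
  | H : ~ E ?a ?b ?c |- _ =>
      lazymatch goal with _ : ~ E a c b |- _ => fail | _ =>
        assert (~ E a c b) by (intro; apply H, (E_swap23 E_hyper); assumption) end
  end.

Ltac close_by_pattern :=
  match goal with
  | H1 : lt ?a ?b, H2 : lt ?b ?c, H3 : lt ?c ?d |- _ =>
      pose proof (lt_trans lt_order _ _ _ H1 H2);
      pose proof (lt_trans lt_order _ _ _ H2 H3);
      pose proof (lt_trans lt_order _ _ _ H1 (lt_trans lt_order _ _ _ H2 H3));
      destruct (patterns a b c d H1 H2 H3) as [P|[P|[P|[P|P]]]]; decompose [and] P; clear P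
  end;
  saturate_E;
  solve [ contradiction
        | (left + right);
          ((apply Crel_of_min) + (apply (Crel_swap E_hyper); apply Crel_of_min)
           + (apply Crel_of_max) + (apply (Crel_swap E_hyper); apply Crel_of_max));
          assumption ].

Lemma Crel_C3 x y z w : C x y z -> C x w z \/ C w y z.
Proof.
  intros hC.
  destruct (classic (w = x)) as [->|nwx]; [right; exact hC|].
  destruct (classic (w = y)) as [->|nwy]; [left; exact hC|].
  destruct (classic (w = z)) as [->|nwz]; [left; exact (Crel_diag _ _ (Crel_neq13 _ _ _ hC))|].
  destruct hC as [[<- nxy]|[(nxy&nyz&nxz&lxy&lxz&e)|(nxy&nyz&nxz&lyx&lzx&ne)]].
  - right; apply Crel_diag; assumption.
  - destruct (lt_connex lt_order y z nyz) as [lyz|lzy].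
    + destruct (lt_insert lt_order x y z w lxy lyz nwx nwy nwz)
        as [?|[[? ?]|[[? ?]|?]]]; close_by_pattern.
    + destruct (lt_insert lt_order x z y w lxz lzy nwx nwz nwy)
        as [?|[[? ?]|[[? ?]|?]]]; close_by_pattern.
  - destruct (lt_connex lt_order y z nyz) as [lyz|lzy].
    + destruct (lt_insert lt_order y z x w lyz lzx nwy nwz nwx)
        as [?|[[? ?]|[[? ?]|?]]]; close_by_pattern.
    + destruct (lt_insert lt_order z y x w lzy lyx nwz nwy nwx)
        as [?|[[? ?]|[[? ?]|?]]]; close_by_pattern.
Qed.

End SeparationAxiom.

Lemma count_true_exists_true (Ps : list Prop) k :
  count_true Ps k -> 0 < k -> exists P, In P Ps /\ P.
Proof.
  induction 1 as [|P Ps k hP _ IH|P Ps k _ _ IH]; intros hk.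
  - inversion hk.
  - exists P; simpl; auto.
  - destruct (IH hk) as (Q & inQ & hQ); exists Q; simpl; auto.
Qed.

Lemma count_true_exists_false (Ps : list Prop) k :
  count_true Ps k -> k < length Ps -> exists P, In P Ps /\ ~ P.
Proof.
  induction 1 as [|P Ps k _ _ IH|P Ps k hP _ IH]; simpl; intros hk.
  - inversion hk.
  - destruct IH as (Q & inQ & hQ); [apply PeanoNat.Nat.succ_lt_mono, hk|].
    exists Q; simpl; auto.
  - exists P; simpl; auto.
Qed.

Section IncreasingTriples.

Context {N : Type} {E : N -> N -> N -> Prop} {lt : N -> N -> Prop}.
Hypothesis E_hyper : hyper3 E.
Hypothesis lt_order : strict_total_order lt.

Lemma increasing_triple_of_distinct p q r : p <> q -> q <> r -> p <> r ->
  exists a b c, lt a b /\ lt b c /\ (E a b c <-> E p q r).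
Proof.
  revert p q r.
  apply (sorted_triple_wlog lt_order
           (fun p q r => exists a b c, lt a b /\ lt b c /\ (E a b c <-> E p q r))).
  - intros p q r (a & b & c & hab & hbc & same).
    exists a, b, c; repeat split; try assumption; intro e.
    + apply (E_swap12 E_hyper), same, e.
    + apply same, (E_swap12 E_hyper), e.
  - intros p q r (a & b & c & hab & hbc & same).
    exists a, b, c; repeat split; try assumption; intro e.
    + apply (E_swap23 E_hyper), same, e.
    + apply same, (E_swap23 E_hyper), e.
  - intros a b c hab hbc; exists a, b, c; tauto.
Qed.

Lemma increasing_edge_and_nonedge :
  (exists a b c d, NoDup [a; b; c; d] /\ edge_count_4 E a b c d 1) ->
  (exists a b c, lt a b /\ lt b c /\ E a b c) /\
  (exists a b c, lt a b /\ lt b c /\ ~ E a b c).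
Proof.
  intros (a & b & c & d & nodup & count).
  assert (dist : a <> b /\ a <> c /\ a <> d /\ b <> c /\ b <> d /\ c <> d).
  { rewrite !NoDup_cons_iff in nodup; simpl in nodup.
    repeat split; intros ->; tauto. }
  destruct dist as (nab & nac & nad & nbc & nbd & ncd).
  assert (edge : forall p q r, E p q r -> p <> q -> q <> r -> p <> r ->
            exists x y z, lt x y /\ lt y z /\ E x y z).
  { intros p q r e npq nqr npr.
    destruct (increasing_triple_of_distinct p q r npq nqr npr) as (x & y & z & hxy & hyz & same).
    exists x, y, z; tauto. }
  assert (nonedge : forall p q r, ~ E p q r -> p <> q -> q <> r -> p <> r ->
            exists x y z, lt x y /\ lt y z /\ ~ E x y z).
  { intros p q r ne npq nqr npr.
    destruct (increasing_triple_of_distinct p q r npq nqr npr) as (x & y & z & hxy & hyz & same).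
    exists x, y, z; tauto. }
  split.
  - destruct (count_true_exists_true _ _ count) as (P & inP & hP); [auto|].
    simpl in inP; destruct inP as [<-|[<-|[<-|[<-|[]]]]]; eapply edge; eauto.
  - destruct (count_true_exists_false _ _ count) as (P & inP & hP); [simpl; auto|].
    simpl in inP; destruct inP as [<-|[<-|[<-|[<-|[]]]]]; eapply nonedge; eauto.
Qed.

End IncreasingTriples.

Lemma countably_infinite_nontrivial (N : Type) :
  countably_infinite N -> forall y : N, exists x, x <> y.
Proof.
  intros (f & f_inj & _) y.
  destruct (classic (f 0 = y)) as [<-|n0]; [|eauto].
  exists (f 1); intro e; discriminate (f_inj _ _ e).
Qed.

Section Homogeneity.

Context {N : Type} {E : N -> N -> N -> Prop} {lt : N -> N -> Prop}.
Hypothesis E_hyper : hyper3 E.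
Hypothesis lt_order : strict_total_order lt.
Hypothesis homogeneous : set_homogeneous_le4 E.
Hypothesis preserved : order_preserved E lt.

Local Notation C := (Crel E lt).

(* Two points never span an edge, so any bijection between 2-sets is an isomorphism;
   the automorphism extending it must then respect the order. *)
Lemma aut_of_increasing_pairs a b c d : lt a b -> lt c d ->
  exists g, is_aut E g /\ g a = c /\ g b = d.
Proof.
  intros hab hcd.
  pose proof (lt_neq lt_order _ _ hab) as nab.
  pose proof (lt_neq lt_order _ _ hcd) as ncd.
  set (f := fun t => if excluded_middle_informative (t = a) then c else d).
  assert (fa : f a = c) by (unfold f; destruct excluded_middle_informative; congruence).
  assert (fb : f b = d) by (unfold f; destruct excluded_middle_informative; congruence).
  assert (nodup : forall x y : N, x <> y -> NoDup [x; y]).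
  { intros x y nxy; repeat constructor; simpl; intuition congruence. }
  assert (iso : induced_iso E [a; b] [c; d] f).
  { split; [|split; [|split]]; simpl.
    - intros x [<-|[<-|[]]]; auto.
    - intros x y [<-|[<-|[]]] [<-|[<-|[]]]; congruence.
    - intros y [<-|[<-|[]]]; [exists a | exists b]; auto.
    - intros x y z [<-|[<-|[]]] [<-|[<-|[]]] [<-|[<-|[]]]; rewrite ?fa, ?fb;
        split; intro e; destruct (proj1 E_hyper _ _ _ e) as (? & ? & ?); congruence. }
  destruct (homogeneous [a; b] [c; d] (nodup a b nab) (nodup c d ncd)
              ltac:(repeat constructor) eq_refl (ex_intro _ f iso))
    as (g & g_aut & g_onto).
  assert (ga : In (g a) [c; d]) by (apply g_onto; exists a; simpl; auto).
  assert (gb : In (g b) [c; d]) by (apply g_onto; exists b; simpl; auto).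
  assert (g_lt : lt (g a) (g b)) by exact (preserved g g_aut a b hab).
  exists g; split; [exact g_aut|].
  simpl in ga, gb.
  destruct ga as [ga|[ga|[]]]; destruct gb as [gb|[gb|[]]]; rewrite <- ga, <- gb in g_lt.
  - destruct (lt_irrefl lt_order _ g_lt).
  - auto.
  - destruct (lt_asym lt_order _ _ hcd g_lt).
  - destruct (lt_irrefl lt_order _ g_lt).
Qed.

Lemma increasing_triple_shift_left t1 t2 t3 b c : lt t1 t2 -> lt t2 t3 -> lt b c ->
  exists a, lt a b /\ (E a b c <-> E t1 t2 t3).
Proof.
  intros h12 h23 hbc.
  destruct (aut_of_increasing_pairs t2 t3 b c h23 hbc) as (g & g_aut & <- & <-).
  exists (g t1); split.
  - exact (preserved g g_aut _ _ h12).
  - symmetry; apply g_aut.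
Qed.

Lemma increasing_triple_shift_right t1 t2 t3 a b : lt t1 t2 -> lt t2 t3 -> lt a b ->
  exists c, lt b c /\ (E a b c <-> E t1 t2 t3).
Proof.
  intros h12 h23 hab.
  destruct (aut_of_increasing_pairs t1 t2 a b h12 hab) as (g & g_aut & <- & <-).
  exists (g t3); split.
  - exact (preserved g g_aut _ _ h23).
  - symmetry; apply g_aut.
Qed.

Hypothesis increasing_edge : exists t1 t2 t3, lt t1 t2 /\ lt t2 t3 /\ E t1 t2 t3.
Hypothesis increasing_nonedge : exists t1 t2 t3, lt t1 t2 /\ lt t2 t3 /\ ~ E t1 t2 t3.

Lemma Crel_exists_apex_of_lt y z : lt y z -> exists x, C x y z.
Proof.
  intros hyz.
  destruct increasing_edge as (t1 & t2 & t3 & h12 & h23 & e).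
  destruct (increasing_triple_shift_left t1 t2 t3 y z h12 h23 hyz) as (x & hxy & same).
  exists x; apply (Crel_of_min lt_order); tauto.
Qed.

Lemma Crel_exists_apex (nontrivial : forall y : N, exists x, x <> y) y z :
  exists x, C x y z.
Proof.
  destruct (classic (y = z)) as [<-|nyz].
  - destruct (nontrivial y) as (x & nxy); exists x; apply Crel_diag, nxy.
  - destruct (lt_connex lt_order y z nyz) as [hyz|hzy]; [auto using Crel_exists_apex_of_lt|].
    destruct (Crel_exists_apex_of_lt z y hzy) as (x & hx).
    exists x; apply (Crel_swap E_hyper), hx.
Qed.

Lemma Crel_exists_partner x y : x <> y -> exists z, y <> z /\ C x y z.
Proof.
  intros nxy; destruct (lt_connex lt_order x y nxy) as [hxy|hyx].
  - destruct increasing_edge as (t1 & t2 & t3 & h12 & h23 & e).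
    destruct (increasing_triple_shift_right t1 t2 t3 x y h12 h23 hxy) as (z & hyz & same).
    exists z; split; [exact (lt_neq lt_order _ _ hyz)|].
    apply (Crel_of_min lt_order); tauto.
  - destruct increasing_nonedge as (t1 & t2 & t3 & h12 & h23 & ne).
    destruct (increasing_triple_shift_left t1 t2 t3 y x h12 h23 hyx) as (z & hzy & same).
    exists z; split; [exact (lt_neq_sym lt_order _ _ hzy)|].
    apply (Crel_swap E_hyper), (Crel_of_max E_hyper lt_order); tauto.
Qed.

End Homogeneity.

Theorem lemma3p10 (N : Type) (E : N -> N -> N -> Prop) (lt : N -> N -> Prop) :
  standing E lt ->
  C_axioms (Crel E lt) /\
  (forall x y z, x <> y -> y <> z -> x <> z ->
     Crel E lt x y z \/ Crel E lt y x z \/ Crel E lt z x y).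
Proof.
  intros (E_hyper & infinite & homogeneous & lt_order & preserved & edge_counts & rules).
  destruct (increasing_edge_and_nonedge E_hyper lt_order (edge_counts 1 ltac:(auto)))
    as [edge nonedge].
  pose proof (increasing_4set_patterns_of_rules E lt rules) as patterns.
  split; [repeat split|].
  - exact (Crel_swap E_hyper).
  - exact (Crel_asym E_hyper lt_order).
  - exact (Crel_C3 E_hyper lt_order patterns).
  - exact Crel_diag.
  - exact (Crel_exists_apex E_hyper lt_order homogeneous preserved edge
             (countably_infinite_nontrivial N infinite)).
  - exact (Crel_exists_partner E_hyper lt_order homogeneous preserved edge nonedge).
  - exact (Crel_some_vertex E_hyper lt_order).
Qed.
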